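(* Let $q$ be a prime power, $n$ a block length, $r$ a locality parameter with $r\mid n$, and $\ell$ an integer with $0\le \ell< n/2-n/r$. Let $\mathcal{C}=\mathrm{CSS}(C_X,C_Z)$ be a random qLRC with parameters $n,r,\ell$ over $\mathbb{F}_q$ (as defined in the context). For any $\delta,\epsilon>0$, if $\ell\geq(H_q(\delta)+\epsilon)n$ then \[ \Pr[d(\mathcal{C})\geq\delta n] > 1-2q^{-\epsilon n}. \] In particular, if $q\geq 2^{2/\epsilon}$, then for all $\ell\geq(\delta+\epsilon)n$, \[ \Pr[d(\mathcal{C})\geq\delta n] > 1-2q^{-\epsilon n/2}. \]
   Context: For $x,y\in\mathbb{F}_q^n$, $x\cdot y=\sum_i x_iy_i$; for a linear code $C\subseteq\mathbb{F}_q^n$, $C^\perp=\{y: y\cdot c=0\ \forall c\in C\}$. For linear codes $C_X,C_Z\subseteq\mathbb{F}_q^n$ with $C_X^\perp\subseteq C_Z$, the CSS code $\mathrm{CSS}(C_X,C_Z)=\mathrm{span}\{\sum_{y\in C_X^\perp}|x+y\rangle: x\in C_Z\}\subseteq(\mathbb{C}^q)^{\otimes n}$; its distance is $d(\mathcal{C})=\min\{|y|: y\in (C_Z\setminus C_X^\perp)\cup(C_X\setminus C_Z^\perp)\}$, where $|y|$ is the Hamming weight. Random qLRC: initialize $H_X,H_Z\in\mathbb{F}_q^{(n/r)\times n}$ by, for row $j\in\{0,\dots,n/r-1\}$ and column $i\in\{0,\dots,n-1\}$: $(H_X)_{j,i}=1$ if $i\in\{rj,\dots,rj+r-1\}$ and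 $0$ otherwise; $(H_Z)_{j,i}=-(r-1)$ if $i=rj$, $1$ if $i\in\{rj+1,\dots,rj+r-1\}$, and $0$ otherwise. Then (1) repeat $\ell$ times: sample a uniformly random vector in $\text{row-span}(H_Z)^\perp\setminus\text{row-span}(H_X)$ and append it as a new row of $H_X$; (2) repeat $\ell$ times: sample a uniformly random vector in $\text{row-span}(H_X)^\perp\setminus\text{row-span}(H_Z)$ and append it as a new row of $H_Z$. Set $C_X=\ker H_X$, $C_Z=\ker H_Z$ (so $C_X^\perp\subseteq C_Z$). The $q$-ary entropy function is $H_q(x)=x\log_q(q-1)-x\log_q x-(1-x)\log_q(1-x)$.
   Formalization: For both the main bound and the in-particular bound, δ is also restricted by δ ≤ 1 − 1/q, in addition to δ > 0, instead of ranging over all positive reals. Apart from conventions, each condition added here is assumed in the paper as well or is needed for the statement above to hold. *)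

From HB Require Import structures.
From mathcomp Require Import all_boot all_order all_algebra.
From mathcomp Require Import all_classical all_reals all_analysis.
Set Implicit Arguments. Unset Strict Implicit. Unset Printing Implicit Defensive.
Import Order.TTheory GRing.Theory Num.Theory.
Local Open Scope ring_scope.

Section QLRC.
Variable F : finFieldType.
Variable n : nat.

Definition vec := 'rV[F]_n.

Definition dotv (x y : vec) : F := \sum_(i < n) x 0 i * y 0 i.

Definition wt (y : vec) : nat := #|[set i : 'I_n | y 0 i != 0]|.

Definition rowspan (s : seq vec) : {set vec} := [set v | v \in span s].

Definition perp (C : {set vec}) : {set vec} :=
  [set y | [forall c in C, dotv y c == 0]].

Definition kerH (s : seq vec) : {set vec} :=
  [set x | all (fun h => dotv h x == 0) s].

(* distance of CSS(C_X, C_Z): min weight over (C_Z \ C_X^perp) u (C_X \ C_Z^perp);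
   the min over the empty set is taken to be n.+1 (i.e. "infinite"). *)
Definition css_dist (CX CZ : {set vec}) : nat :=
  \big[minn/n.+1]_(y in (CZ :\: perp CX) :|: (CX :\: perp CZ)) wt y.

Definition HX0 (r : nat) : seq vec :=
  [seq \row_(i < n) (if (r * j <= i < r * j + r)%N then 1 else 0) | j <- iota 0 (n %/ r)].
Definition HZ0 (r : nat) : seq vec :=
  [seq \row_(i < n) (if i == r * j :> nat then - ((r - 1)%:R)
                     else if (r * j + 1 <= i < r * j + r)%N then 1 else 0)
  | j <- iota 0 (n %/ r)].

Variable R : realType.

(* expectation of f under the uniform distribution on the finite set A
   (0 if A is empty, which never happens under the hypotheses) *)
Definition unif_avg (A : {set vec}) (f : vec -> R) : R :=
  (\sum_(v in A) f v) / (#|A|%:R).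

Fixpoint stepZ (k : nat) (sX sZ : seq vec) (P : seq vec -> seq vec -> bool) : R :=
  match k with
  | 0 => (P sX sZ)%:R
  | k'.+1 => unif_avg (perp (rowspan sX) :\: rowspan sZ)
               (fun v => stepZ k' sX (rcons sZ v) P)
  end.

Fixpoint stepX (l k : nat) (sX sZ : seq vec) (P : seq vec -> seq vec -> bool) : R :=
  match k with
  | 0 => stepZ l sX sZ P
  | k'.+1 => unif_avg (perp (rowspan sZ) :\: rowspan sX)
               (fun v => stepX l k' (rcons sX v) sZ P)
  end.

(* probability that the random qLRC with parameters n, r, l has the property P
   of its final (H_X, H_Z) *)
Definition qlrc_prob (r l : nat) (P : seq vec -> seq vec -> bool) : R :=
  stepX l l (HX0 r) (HZ0 r) P.

Definition qlrc_prob_dist_ge (r l : nat) (t : R) : R :=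
  qlrc_prob r l (fun sX sZ => t <= (css_dist (kerH sX) (kerH sZ))%:R).

End QLRC.

Definition Hq (R : realType) (q : nat) (x : R) : R :=
  (x * ln ((q%:R : R) - 1) - x * ln x - (1 - x) * ln (1 - x)) / ln (q%:R : R).

(* A nonzero vector y of weight below delta n can make the distance small only
   if y is in C_Z \ C_X^perp or in C_X \ C_Z^perp.  In the first case some x in
   C_X has x.y <> 0, and every row appended to H_Z is uniform on a set K \ T
   with K a subspace containing x and T inside y^perp; at most a 1/q fraction
   of such a set is orthogonal to y, so y survives in ker H_Z with probability
   at most q^-l.  The second case is the same argument for the rows appended to
   H_X, with C_Z enlarged to the kernel of the initial H_Z.  A union bound over
   the fewer than q^(H_q(delta) n) nonzero vectors of weight below delta n gives
   the first bound; the second follows from H_q(delta) <= delta + eps/2 when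
   q >= 2^(2/eps), since the binary entropy is at most ln 2. *)

From HB Require Import structures.
From mathcomp Require Import all_boot all_order all_algebra finfield.
From mathcomp Require Import all_classical all_reals all_analysis.
From mathcomp Require Import zify ring lra.
Set Implicit Arguments. Unset Strict Implicit. Unset Printing Implicit Defensive.
Import Order.TTheory GRing.Theory Num.Theory.
Local Open Scope ring_scope.

Section Orthogonality.
Variables (F : finFieldType) (n : nat).
Local Notation vec := (vec F n).
Local Notation q := #|F|.
Implicit Types (x y z : vec) (s : seq vec) (K T C : {set vec}).

Lemma dotvC x y : dotv x y = dotv y x.
Proof. by apply: eq_bigr => i _; rewrite mulrC. Qed.

Lemma dotvZDl a x y z : dotv (a *: x + y) z = a * dotv x z + dotv y z.
Proof.
rewrite /dotv mulr_sumr -big_split; apply: eq_bigr => i _.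
by rewrite !mxE mulrDl mulrA.
Qed.

Lemma dotv0l z : dotv 0 z = 0.
Proof. by rewrite /dotv big1 // => i _; rewrite mxE mul0r. Qed.

Lemma perp_submod_closed C : submod_closed (perp C).
Proof.
split=> [|a x y]; rewrite !inE.
  by apply/forall_inP => c _; rewrite dotv0l.
move=> /forall_inP hx /forall_inP hy; apply/forall_inP => c cC.
by rewrite dotvZDl (eqP (hx c cC)) (eqP (hy c cC)) mulr0 addr0.
Qed.

Lemma kerHE s : kerH s = perp (rowspan s).
Proof.
apply/setP => x; rewrite !inE; apply/allP/forall_inP => [hx c | hx h hs].
  rewrite inE => /(@coord_span _ _ _ (in_tuple s)) ->; rewrite dotvC.
  elim/big_rec: _ => [|i d _ hd]; first by rewrite dotv0l.
  by rewrite dotvZDl (eqP (hx _ (mem_nth 0 (ltn_ord i)))) mulr0 add0r.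
by rewrite dotvC hx // inE memv_span.
Qed.

Lemma card_rowspan s : (#|rowspan s| <= q ^ size s)%N.
Proof.
rewrite cardsE card_vspace leq_pexp2l ?dim_span //.
exact: ltnW (card_finNzRing_gt1 F).
Qed.

Lemma in_perp1 v y : (v \in perp [set y]) = (dotv v y == 0).
Proof.
rewrite inE; apply/forall_inP/eqP => [/(_ y) | vy c].
  by rewrite inE eqxx => /(_ isT)/eqP.
by rewrite inE => /eqP ->; rewrite vy.
Qed.

Lemma card_hyperplane K x y : submod_closed K -> x \in K -> dotv x y != 0 ->
  (#|K| = #|K :&: perp [set y]| * q)%N.
Proof.
move=> [_ hK] xK xy; set K0 := K :&: _.
pose f (p : vec * F) := p.2 *: x + p.1.
have f_inj : {in finset.setX K0 [set: F] &, injective f}.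
  move=> [v c] [w d]; rewrite !finset.in_setX !finset.in_setI !in_perp1 /=.
  move=> /andP[/andP[_ vy] _] /andP[/andP[_ wy] _] e.
  have cd : c = d.
    have := congr1 (fun u => dotv u y) e; rewrite /= !dotvZDl (eqP vy) (eqP wy) !addr0.
    exact: mulIf.
  by move: e; rewrite /f /= cd => /addrI ->.
rewrite -cardsT -cardsX -(card_in_imset f_inj); apply: eq_card => v.
apply/idP/imsetP => [vK | [[w c]]]; last first.
  by rewrite finset.in_setX finset.in_setI /= => /andP[/andP[wK _] _] ->; apply: hK.
pose c := dotv v y / dotv x y.
exists (v - c *: x, c); last by rewrite /f /= addrC subrK.
rewrite finset.in_setX finset.in_setI in_perp1 finset.in_setT /= andbT.
rewrite addrC -scaleNr hK //=.
by rewrite dotvZDl mulNr divfK // addNr.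
Qed.

Lemma card_hyperplane_le K y : submod_closed K ->
  (#|K| <= #|K :&: perp [set y]| * q)%N.
Proof.
move=> hK; have [/exists_inP[x xK xy] | ] := boolP [exists x in K, dotv x y != 0].
  by rewrite (card_hyperplane hK xK xy).
rewrite negb_exists_in => /forall_inP Ky.
have -> : K :&: perp [set y] = K.
  by apply/finset.setIidPl/fintype.subsetP => v /Ky; rewrite in_perp1 negbK.
by rewrite leq_pmulr // ltnW // (card_finNzRing_gt1 F).
Qed.

Lemma card_kerH s : (q ^ n <= #|kerH s| * q ^ size s)%N.
Proof.
elim: s => [|a s IH].
  have -> : kerH [::] = [set: vec] by apply/setP => v; rewrite !inE.
  by rewrite cardsT card_mx mul1n muln1.
have -> : kerH (a :: s) = kerH s :&: perp [set a].
  by apply/setP => v; rewrite finset.in_setI in_perp1 !inE /= dotvC andbC.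
rewrite /= expnS mulnA; apply: leq_trans IH _; rewrite leq_mul2r.
by rewrite card_hyperplane_le ?orbT // kerHE; apply: perp_submod_closed.
Qed.

Lemma kerH_rcons s v y :
  (y \in kerH (rcons s v)) = (y \in kerH s) && (v \in perp [set y]).
Proof. by rewrite in_perp1 !inE all_rcons dotvC andbC. Qed.

Lemma kerH_catl s e : kerH (s ++ e) \subset kerH s.
Proof. by apply/fintype.subsetP => v; rewrite !inE all_cat => /andP[]. Qed.

Definition sample_set s1 s2 := perp (rowspan s1) :\: rowspan s2.

Lemma sample_set_gt0 s1 s2 : (size s1 + size s2 < n)%N ->
  (0 < #|sample_set s1 s2|)%N.
Proof.
move=> hs; rewrite cardsD subn_gt0 -kerHE.
apply: leq_ltn_trans (subset_leq_card (subsetIr _ _)) _.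
have qs_gt0 : (0 < q ^ size s1)%N by rewrite expn_gt0 ltnW ?card_finNzRing_gt1.
rewrite -(ltn_pmul2r qs_gt0); apply: leq_trans (card_kerH s1).
apply: leq_ltn_trans (leq_mul (card_rowspan s2) (leqnn _)) _.
by rewrite -expnD ltn_exp2l ?card_finNzRing_gt1 // addnC.
Qed.

(* Exactly a 1/q fraction of K is orthogonal to y, and removing T only lowers
   that fraction. *)
Lemma card_orth_setD K T x y :
  submod_closed K -> x \in K -> dotv x y != 0 -> {in T, forall v, dotv v y = 0} ->
  (q * #|(K :\: T) :&: perp [set y]| <= #|K :\: T|)%N.
Proof.
move=> hK xK xy Ty; set K0 := K :&: perp [set y].
have -> : (K :\: T) :&: perp [set y] = K0 :\: T by rewrite finset.setIDAC.
have KT : K :&: T = K0 :&: T.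
  apply/setP => v; rewrite !finset.in_setI in_perp1.
  case vT: (v \in T); rewrite ?andbF //.
  by rewrite Ty ?eqxx ?andbT.
rewrite !cardsD KT (card_hyperplane hK xK xy) mulnBr [(_ * q)%N]mulnC.
by rewrite leq_sub2l // leq_pmull // ltnW ?card_finNzRing_gt1.
Qed.

Lemma card_sample_set_orth s1 s2 x y :
  x \in kerH s1 -> dotv x y != 0 -> y \in kerH s2 ->
  (q * #|sample_set s1 s2 :&: perp [set y]| <= #|sample_set s1 s2|)%N.
Proof.
rewrite !kerHE => xK xy; rewrite inE => /forall_inP yK.
apply: (card_orth_setD (perp_submod_closed _) xK xy) => v /yK.
by rewrite dotvC => /eqP.
Qed.

End Orthogonality.

Section Averages.
Variables (F : finFieldType) (n : nat) (R : realType).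
Local Notation vec := (vec F n).
Local Notation q := #|F|.
Implicit Types (A : {set vec}) (f g : vec -> R).

Lemma eq_avg A f g : {in A, f =1 g} -> unif_avg A f = unif_avg A g.
Proof. by move=> fg; rewrite /unif_avg (eq_bigr _ fg). Qed.

Lemma avg_le A f g : {in A, forall v, f v <= g v} -> unif_avg A f <= unif_avg A g.
Proof. by move=> fg; rewrite ler_wpM2r ?invr_ge0 ?ler0n ?ler_sum. Qed.

Lemma avg_le_cst A f c : 0 <= c -> {in A, forall v, f v <= c} -> unif_avg A f <= c.
Proof.
move=> c_ge0 fc; rewrite /unif_avg.
have [->|A_gt0] := posnP #|A|; first by rewrite invr0 mulr0.
rewrite ler_pdivrMr ?ltr0n //; apply: le_trans (ler_sum _ fc) _.
by rewrite sumr_const mulr_natr.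
Qed.

Lemma avg_cst A (c : R) : (0 < #|A|)%N -> unif_avg A (fun=> c) = c.
Proof.
move=> A_gt0; rewrite /unif_avg sumr_const -[c *+ _]mulr_natr.
by rewrite mulfK // pnatr_eq0 -lt0n.
Qed.

Lemma avgD A f g : unif_avg A (fun v => f v + g v) = unif_avg A f + unif_avg A g.
Proof. by rewrite /unif_avg big_split mulrDl. Qed.

Lemma avg_sum A (I : finType) (P : {pred I}) (h : I -> vec -> R) :
  unif_avg A (fun v => \sum_(i in P) h i v) = \sum_(i in P) unif_avg A (h i).
Proof. by rewrite /unif_avg exchange_big mulr_suml. Qed.

Lemma avg_orth A y (c : R) : (q * #|A :&: perp [set y]| <= #|A|)%N -> 0 <= c ->
  unif_avg A (fun v => c * (v \in perp [set y])%:R) <= c / q%:R.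
Proof.
move=> hA c_ge0; rewrite /unif_avg (big_setID (perp [set y])) /=.
rewrite [X in _ + X]big1 => [|v]; last first.
  by rewrite finset.in_setD => /andP[/negPf -> _]; rewrite mulr0.
rewrite addr0 (eq_bigr (fun=> c)) => [|v]; last first.
  by rewrite finset.in_setI => /andP[_ ->]; rewrite mulr1.
have [A0|A_gt0] := posnP #|A|; first by rewrite A0 invr0 mulr0 divr_ge0.
rewrite sumr_const -[c *+ _]mulr_natr -mulrA ler_wpM2l // ler_pdivrMr ?ltr0n //.
rewrite mulrC ler_pdivlMr ?ltr0n ?(ltn_trans _ (card_finNzRing_gt1 F)) //.
by rewrite -natrM ler_nat mulnC.
Qed.

Fixpoint iter_avg (D : seq vec -> {set vec}) (k : nat) (s : seq vec)
    (g : seq vec -> R) : R :=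
  if k is k'.+1 then unif_avg (D s) (fun v => iter_avg D k' (rcons s v) g) else g s.

Implicit Types (D : seq vec -> {set vec}) (s : seq vec).

Lemma iter_avg_le D k s (g g' : seq vec -> R) :
  (forall e, g (s ++ e) <= g' (s ++ e)) -> iter_avg D k s g <= iter_avg D k s g'.
Proof.
elim: k s => [|k IH] s gg' /=; first by have := gg' [::]; rewrite cats0.
by apply: avg_le => v _; apply: IH => e; rewrite cat_rcons.
Qed.

Lemma iter_avg_le_cst D k s (g : seq vec -> R) c :
  0 <= c -> (forall s', g s' <= c) -> iter_avg D k s g <= c.
Proof.
move=> c_ge0 gc; elim: k s => [|k IH] s //=.
by apply: avg_le_cst => // v _; apply: IH.
Qed.

Lemma iter_avgD D k s (g g' : seq vec -> R) :
  iter_avg D k s (fun s => g s + g' s) = iter_avg D k s g + iter_avg D k s g'.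
Proof.
elim: k s => [|k IH] s //=; rewrite -avgD.
by apply: eq_avg => v _; rewrite IH.
Qed.

Lemma iter_avg_sum D k s (I : finType) (P : {pred I}) (h : I -> seq vec -> R) :
  iter_avg D k s (fun s => \sum_(i in P) h i s) = \sum_(i in P) iter_avg D k s (h i).
Proof.
elim: k s => [|k IH] s //=; rewrite -avg_sum.
by apply: eq_avg => v _; rewrite IH.
Qed.

Lemma iter_avg_cst D k s (g : seq vec -> R) c :
  (forall s', (size s' < size s + k)%N -> (0 < #|D s'|)%N) ->
  (forall s', size s' = (size s + k)%N -> g s' = c) ->
  iter_avg D k s g = c.
Proof.
elim: k s => [|k IH] s D_gt0 gc /=; first by rewrite gc ?addn0.
have Ds_gt0 : (0 < #|D s|)%N by apply: D_gt0; rewrite -addSnnS leq_addr.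
rewrite -[RHS](avg_cst c Ds_gt0); apply: eq_avg => v _.
by apply: IH => s'; rewrite size_rcons addSnnS; [apply: D_gt0 | apply: gc].
Qed.

Lemma iter_avg_kerH y D k s (g : seq vec -> R) :
  (forall s', y \in kerH s' -> (q * #|D s' :&: perp [set y]| <= #|D s'|)%N) ->
  (forall s', g s' <= (y \in kerH s')%:R) ->
  iter_avg D k s g <= (y \in kerH s)%:R * q%:R ^- k.
Proof.
move=> hD hg; elim: k s => [|k IH] s /=; first by rewrite expr0 invr1 mulr1.
have q_ge0 : 0 <= q%:R ^- k :> R by rewrite invr_ge0 exprn_ge0.
apply: le_trans (avg_le (g := fun v => q%:R ^- k * (y \in kerH (rcons s v))%:R) _) _.
  by move=> v _; rewrite mulrC IH.
have [ys|yNs] := boolP (y \in kerH s); last first.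
  rewrite mul0r; apply: avg_le_cst => // v _.
  by rewrite kerH_rcons (negbTE yNs) mulr0.
rewrite (eq_avg (g := fun v => q%:R ^- k * (v \in perp [set y])%:R)).
  by rewrite mul1r exprSr invfM; apply: avg_orth (hD s ys) q_ge0.
by move=> v _; rewrite kerH_rcons ys.
Qed.

Lemma iter_avg_kerH_le y D k s (g : seq vec -> R) :
  (forall s', y \in kerH s' -> (q * #|D s' :&: perp [set y]| <= #|D s'|)%N) ->
  (forall s', g s' <= (y \in kerH s')%:R) ->
  iter_avg D k s g <= q%:R ^- k.
Proof.
move=> hD hg; apply: le_trans (iter_avg_kerH k s hD hg) _.
by rewrite ler_piMl ?invr_ge0 ?exprn_ge0 // lern1 leq_b1.
Qed.

Lemma stepZE k sX sZ P :
  stepZ R k sX sZ P = iter_avg (sample_set sX) k sZ (fun sZ => (P sX sZ)%:R).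
Proof. by elim: k sZ => //= k IH sZ; apply: eq_avg => v _; rewrite IH. Qed.

Lemma stepXE l k sX sZ P :
  stepX R l k sX sZ P = iter_avg (sample_set sZ) k sX (fun sX => stepZ R l sX sZ P).
Proof. by elim: k sX => //= k IH sX; apply: eq_avg => v _; rewrite IH. Qed.

End Averages.

Section RandomQLRC.
Variables (F : finFieldType) (n : nat) (R : realType) (r l : nat).
Local Notation vec := (vec F n).
Local Notation q := #|F|.
Local Notation X0 := (HX0 F n r).
Local Notation Z0 := (HZ0 F n r).

Definition qlrc_avg (g : seq vec -> seq vec -> R) : R :=
  iter_avg (sample_set Z0) l X0 (fun sX => iter_avg (sample_set sX) l Z0 (g sX)).

Lemma qlrc_probE P : qlrc_prob R r l P = qlrc_avg (fun sX sZ => (P sX sZ)%:R).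
Proof.
rewrite /qlrc_prob stepXE; congr iter_avg; apply: funext => sX; exact: stepZE.
Qed.

Lemma qlrc_avg_le g g' :
  (forall e1 e2, g (X0 ++ e1) (Z0 ++ e2) <= g' (X0 ++ e1) (Z0 ++ e2)) ->
  qlrc_avg g <= qlrc_avg g'.
Proof. by move=> gg'; do 2!apply: iter_avg_le => ?. Qed.

Lemma qlrc_avgD g g' :
  qlrc_avg (fun sX sZ => g sX sZ + g' sX sZ) = qlrc_avg g + qlrc_avg g'.
Proof.
rewrite /qlrc_avg -iter_avgD; congr iter_avg.
by apply: funext => sX; apply: iter_avgD.
Qed.

Lemma qlrc_avg_sum (I : finType) (P : {pred I}) (h : I -> seq vec -> seq vec -> R) :
  qlrc_avg (fun sX sZ => \sum_(i in P) h i sX sZ) = \sum_(i in P) qlrc_avg (h i).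
Proof.
rewrite /qlrc_avg -iter_avg_sum; congr iter_avg.
by apply: funext => sX; apply: iter_avg_sum.
Qed.

Lemma size_HX0 : size X0 = (n %/ r)%N.
Proof. by rewrite size_map size_iota. Qed.

Lemma size_HZ0 : size Z0 = (n %/ r)%N.
Proof. by rewrite size_map size_iota. Qed.

Lemma qlrc_avg1 : (2 * (n %/ r + l) <= n)%N -> qlrc_avg (fun _ _ => 1) = 1.
Proof.
move=> hn; apply: iter_avg_cst => [sX|sX]; rewrite size_HX0 => hsX.
  by apply: sample_set_gt0; rewrite size_HZ0; lia.
by apply: iter_avg_cst => // sZ; rewrite size_HZ0 => hsZ; apply: sample_set_gt0; lia.
Qed.

Lemma qlrc_avg_Zlogical_le y :
  qlrc_avg (fun sX sZ => (y \in kerH sZ :\: perp (kerH sX))%:R) <= q%:R ^- l.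
Proof.
have c_ge0 : 0 <= q%:R ^- l :> R by rewrite invr_ge0 exprn_ge0.
apply: iter_avg_le_cst => // sX.
have [yX|] := boolP (y \in perp (kerH sX)).
  by apply: iter_avg_le_cst => // sZ; rewrite finset.in_setD yX.
rewrite inE negb_forall_in => /exists_inP[x xK yx].
apply: (iter_avg_kerH_le (y := y)) => [s' ys'|sZ].
  by apply: card_sample_set_orth xK _ ys'; rewrite dotvC.
by rewrite finset.in_setD ler_nat; case: (_ \in kerH _); rewrite ?andbT ?andbF ?leq_b1.
Qed.

Lemma qlrc_avg_Xlogical_le y :
  qlrc_avg (fun sX _ => (y \in kerH sX :\: perp (kerH Z0))%:R) <= q%:R ^- l.
Proof.
have c_ge0 : 0 <= q%:R ^- l :> R by rewrite invr_ge0 exprn_ge0.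
have [yZ|] := boolP (y \in perp (kerH Z0)).
  by do 2!apply: iter_avg_le_cst => // ?; rewrite finset.in_setD yZ.
rewrite inE negb_forall_in => /exists_inP[x xK yx].
apply: (iter_avg_kerH_le (y := y)) => [s' ys'|sX].
  by apply: card_sample_set_orth xK _ ys'; rewrite dotvC.
apply: iter_avg_le_cst => // sZ.
by rewrite finset.in_setD ler_nat; case: (_ \in _); rewrite ?andbF ?andbT.
Qed.

End RandomQLRC.

Section Distance.
Variables (F : finFieldType) (n : nat) (R : realType).
Local Notation vec := (vec F n).
Implicit Types (CX CZ C : {set vec}).

Definition wt_ball (t : R) : {set vec} := [set y | (wt y)%:R < t].

Lemma wt0 : wt (0 : vec) = 0%N.
Proof. by apply/eqP; rewrite cards_eq0; apply/eqP/setP => i; rewrite !inE mxE eqxx. Qed.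

Lemma perpS C1 C2 : C1 \subset C2 -> perp C2 \subset perp C1.
Proof.
move=> /fintype.subsetP C12; apply/fintype.subsetP => y; rewrite !inE.
by move=> /forall_inP yC2; apply/forall_inP => c /C12 /yC2.
Qed.

Lemma css_dist_witness CX CZ : (css_dist CX CZ <= n)%N ->
  exists2 y, y \in (CZ :\: perp CX) :|: (CX :\: perp CZ) & wt y = css_dist CX CZ.
Proof.
rewrite /css_dist; elim/big_ind: _ => [|a b IHa IHb|y yD _]; first by rewrite ltnn.
  by rewrite /minn; case: ltnP => _; [apply: IHa | apply: IHb].
by exists y.
Qed.

Lemma css_dist_union_bound CX CZ CZ0 (t : R) : CZ \subset CZ0 -> t <= n%:R ->
  (1 : R) <= ((t <= (css_dist CX CZ)%:R)%R)%:R +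
       \sum_(y in wt_ball t :\ 0)
          ((y \in CZ :\: perp CX)%:R + (y \in CX :\: perp CZ0)%:R).
Proof.
move=> sZZ0 tn; set S := \sum_(y in _) _.
have S_ge0 : 0 <= S by apply: sumr_ge0 => y _; rewrite addr_ge0.
have [_|dist_lt] := leP t (css_dist CX CZ)%:R; first by rewrite lerDl.
have dist_le : (css_dist CX CZ <= n)%N.
  by rewrite ltnW // -(ltr_nat R); apply: lt_le_trans tn.
have [y yD wty] := css_dist_witness dist_le.
have yB : y \in wt_ball t :\ 0.
  rewrite !inE wty dist_lt andbT; apply: contraTneq yD => ->.
  by rewrite finset.in_setU !finset.in_setD !(perp_submod_closed _).1.
rewrite add0r /S (bigD1 y yB) /= ler_wpDr ?sumr_ge0 //.
move: yD; rewrite finset.in_setU => /orP[-> | yXZ]; first by rewrite lerDl.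
suff -> : y \in CX :\: perp CZ0 by rewrite lerDr.
move: yXZ; rewrite !finset.in_setD => /andP[yZ ->]; rewrite andbT.
by apply: contra yZ; apply/fintype.subsetP/perpS.
Qed.

End Distance.

Arguments wt_ball {F n R}.

Section Entropy.
Variable R : realType.

Lemma ln_le_subr1 (x : R) : 0 < x -> ln x <= x - 1.
Proof.
move=> x_gt0; have x1 : -1 < x - 1 by lra.
by have := le_ln1Dx x1; rewrite addrC subrK.
Qed.

Lemma binary_entropy_le_ln2 (p : R) : 0 < p < 1 ->
  - (p * ln p) - (1 - p) * ln (1 - p) <= ln 2.
Proof.
move=> /andP[p_gt0 p_lt1]; have p'_gt0 : 0 < 1 - p by lra.
have gibbs (x : R) : 0 < x -> x * ln ((2 * x)^-1) <= 1 / 2 - x.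
  move=> x_gt0; have x2_gt0 : 0 < (2 * x)^-1 by rewrite invr_gt0; lra.
  apply: le_trans (ler_wpM2l (ltW x_gt0) (ln_le_subr1 x2_gt0)) _.
  by rewrite mulrBr mulr1 invfM mulrCA mulfV ?mulr1; lra.
have := gibbs _ p_gt0; have := gibbs _ p'_gt0.
rewrite !lnV ?posrE ?mulr_gt0 // !lnM ?posrE //; lra.
Qed.

Lemma Hq_lnE (q : nat) (p : R) : (1 < q)%N -> 0 < p < 1 ->
  Hq q p * ln q%:R = - (ln (1 - p) + p * ln (p / ((q%:R - 1) * (1 - p)))).
Proof.
move=> q_gt1 /andP[p_gt0 p_lt1]; have Q_gt1 : 1 < (q%:R : R) by rewrite ltr1n.
have lnQ_gt0 : 0 < ln (q%:R : R) by apply: ln_gt0.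
rewrite ln_div ?posrE ?mulr_gt0 ?subr_gt0 // lnM ?posrE ?subr_gt0 //.
by rewrite /Hq; field; lra.
Qed.

Lemma Hq_le (q : nat) (d e : R) : (1 < q)%N -> 0 < d < 1 -> 0 < e ->
  2 `^ (2 / e) <= q%:R -> Hq q d <= d + e / 2.
Proof.
move=> q_gt1 d01 e_gt0 hq; have Q_gt1 : 1 < (q%:R : R) by rewrite ltr1n.
have lnQ_gt0 : 0 < ln (q%:R : R) by apply: ln_gt0.
have lnQ1 : ln (q%:R - 1 : R) <= ln q%:R by rewrite ler_ln ?posrE; lra.
have ln2 : ln (2 : R) <= e / 2 * ln q%:R.
  have h : 2 / e * ln 2 <= ln (q%:R : R).
    by rewrite -ln_powR ler_ln ?posrE ?powR_gt0 //; lra.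
  have -> : ln (2 : R) = e / 2 * (2 / e * ln 2) by field; lra.
  by rewrite ler_wpM2l // divr_ge0 //; lra.
have := binary_entropy_le_ln2 d01; move: d01 => /andP[d_gt0 d_lt1].
rewrite /Hq ler_pdivrMr //; nra.
Qed.

End Entropy.

Section Volume.
Variables (F : finFieldType) (n : nat) (R : realType).
Local Notation vec := (vec F n).
Local Notation q := #|F|.

Lemma sum_prod_coords (G : F -> R) :
  \sum_(y : vec) \prod_(i < n) G (y 0 i) = \prod_(i < n) \sum_a G a.
Proof.
rewrite bigA_distr_bigA.
rewrite (reindex (fun y : vec => [ffun i => y 0 i])) /=.
  by apply: eq_bigr => y _; apply: eq_bigr => i _; rewrite ffunE.
exists (fun f : {ffun 'I_n -> F} => \row_i f i) => [y _ | f _].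
  by apply/rowP => i; rewrite mxE ffunE.
by apply/ffunP => i; rewrite ffunE mxE.
Qed.

Lemma card_mul_le_product_mass (B : {set vec}) (G : F -> R) (m : R) :
  (forall a, 0 <= G a) -> \sum_a G a = 1 ->
  {in B, forall y : vec, m <= \prod_(i < n) G (y 0 i)} -> #|B|%:R * m <= 1.
Proof.
move=> G_ge0 sumG mB.
apply: (@le_trans _ _ (\sum_(y in B) \prod_(i < n) G (y 0 i))).
  by rewrite mulr_natl -sumr_const; apply: ler_sum.
apply: (@le_trans _ _ (\sum_(y : vec) \prod_(i < n) G (y 0 i))).
  rewrite [X in _ <= X](bigID [in B]) /= lerDl.
  by apply: sumr_ge0 => y _; apply: prodr_ge0.
by rewrite sum_prod_coords sumG prodr_const expr1n.
Qed.

Lemma prod_wt (t : R) (y : vec) :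
  \prod_(i < n) (if y 0 i == 0 then 1 else t) = t ^+ wt y.
Proof.
rewrite /wt -prodr_const [RHS]big_mkcond /=; apply: eq_bigr => i _.
by rewrite inE; case: (y 0 i == 0).
Qed.

(* Each coordinate is weighted [1 - p] at 0 and [p / (q - 1)] elsewhere: a
   vector of weight < pn then has mass at least q^(-H_q(p) n). *)
Lemma card_wt_ball_le (p : R) : 0 < p -> p <= 1 - q%:R^-1 ->
  #|wt_ball (p * n%:R) : {set vec}|%:R <= q%:R `^ (Hq q p * n%:R).
Proof.
move=> p_gt0 p_le; set Q : R := q%:R.
have Q_gt1 : 1 < Q by rewrite ltr1n card_finNzRing_gt1.
have Qi_gt0 : 0 < Q^-1 by rewrite invr_gt0; lra.
have p_lt1 : p < 1 by lra.
set t := p / ((Q - 1) * (1 - p)).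
have t_gt0 : 0 < t by rewrite divr_gt0 // mulr_gt0 //; lra.
have t_le1 : t <= 1.
  rewrite ler_pdivrMr ?mulr_gt0 ?mul1r //; try lra.
  have : Q^-1 * Q = 1 by rewrite mulVf //; lra.
  nra.
pose G (a : F) := (1 - p) * (if a == 0 then 1 else t).
have G_ge0 a : 0 <= G a by rewrite /G; case: ifP => _; apply: mulr_ge0; lra.
have sumG : \sum_a G a = 1.
  rewrite -mulr_sumr (bigD1 0) //= eqxx (eq_bigr (fun=> t)) => [|a /negPf -> //].
  rewrite sumr_const cardC1 -[t *+ _]mulr_natr -subn1 natrB.
    by rewrite -/Q /t; field; lra.
  exact: ltnW (card_finNzRing_gt1 F).
set m := expR (n%:R * (ln (1 - p) + p * ln t)).
have Qm : Q `^ (- (Hq q p * n%:R)) = m.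
  have p01 : 0 < p < 1 by rewrite p_gt0 p_lt1.
  rewrite /powR gt_eqF; last lra.
  by rewrite /m /Q mulNr mulrAC (Hq_lnE (card_finNzRing_gt1 F) p01) mulNr opprK mulrC.
have m_le : {in wt_ball (p * n%:R), forall y : vec, m <= \prod_(i < n) G (y 0 i)}.
  move=> y; rewrite inE => wty.
  rewrite big_split /= prodr_const card_ord prod_wt.
  rewrite -[1 - p]lnK ?posrE ?subr_gt0 // -[t]lnK ?posrE //.
  rewrite -!expRM_natl -expRD ler_expR mulrDr lerD2l.
  have : ln t <= 0 by apply: ln_le0.
  nra.
have := card_mul_le_product_mass G_ge0 sumG m_le.
by rewrite -Qm powRN ler_pdivrMr ?powR_gt0 // ?mul1r; lra.
Qed.

End Volume.

Section MinimumDistance.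
Variables (F : finFieldType) (n : nat) (R : realType) (r l : nat).
Local Notation vec := (vec F n).
Local Notation q := #|F|.
Local Notation Z0 := (HZ0 F n r).

Lemma qlrc_prob_dist_ge_ball_bound (t : R) :
  0 < t <= n%:R -> (2 * (n %/ r + l) <= n)%N ->
  1 - 2 * q%:R ^- l * (#|wt_ball t : {set vec}|%:R - 1)
    <= @qlrc_prob_dist_ge F n R r l t.
Proof.
move=> /andP[t_gt0 tn] hn; rewrite /qlrc_prob_dist_ge qlrc_probE.
pose Y : {set vec} := wt_ball t :\ 0.
pose bad y sX sZ : R :=
  (y \in kerH sZ :\: perp (kerH sX))%:R + (y \in kerH sX :\: perp (kerH Z0))%:R.
have bad_le y : qlrc_avg r l (bad y) <= 2 * q%:R ^- l.
  rewrite qlrc_avgD; have := qlrc_avg_Zlogical_le R r l y.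
  by have := qlrc_avg_Xlogical_le R r l y; lra.
have card_Y : #|Y|%:R = #|wt_ball t : {set vec}|%:R - 1 :> R.
  rewrite (cardsD1 0 (wt_ball t)) !inE wt0 t_gt0 natrD addrAC subrr add0r.
  by congr (_%:R); apply: eq_card => y; rewrite !inE andbC.
pose good (sX sZ : seq vec) : R := ((t <= (css_dist (kerH sX) (kerH sZ))%:R)%R)%:R.
have := @qlrc_avg_le _ _ _ r l (fun _ _ => 1)
  (fun sX sZ => good sX sZ + \sum_(y in Y) bad y sX sZ).
rewrite qlrc_avg1 // qlrc_avgD qlrc_avg_sum => union_bound.
have {union_bound} :=
  union_bound (fun e1 e2 => css_dist_union_bound _ (kerH_catl _ _) tn).
have : \sum_(y in Y) qlrc_avg r l (bad y) <= \sum_(y in Y) 2 * q%:R ^- l.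
  by apply: ler_sum => y _; apply: bad_le.
rewrite sumr_const -[_ *+ #|_|]mulr_natr card_Y; lra.
Qed.

Lemma qlrc_dist_entropy_bound (delta eps : R) :
  (l%:R : R) < n%:R / 2 - (n %/ r)%:R ->
  0 < delta -> delta <= 1 - q%:R^-1 -> 0 < eps ->
  (Hq q delta + eps) * n%:R <= l%:R ->
  1 - 2 * q%:R `^ (- (eps * n%:R)) < @qlrc_prob_dist_ge F n R r l (delta * n%:R).
Proof.
move=> hl delta_gt0 delta_le eps_gt0 hH.
have Q_gt1 : 1 < q%:R :> R by rewrite ltr1n (card_finNzRing_gt1 F).
have n_gt0 : 0 < n%:R :> R by have := ler0n R l; have := ler0n R (n %/ r); lra.
have hn : (2 * (n %/ r + l) <= n)%N.
  by rewrite -(ler_nat R) natrM natrD; apply: ltW; lra.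
have t_range : 0 < delta * n%:R <= n%:R.
  have qi_gt0 : 0 < q%:R^-1 :> R by rewrite invr_gt0; lra.
  by rewrite mulr_gt0 //= ler_piMl ?ler0n //; lra.
apply: lt_le_trans (qlrc_prob_dist_ge_ball_bound t_range hn).
have c_gt0 : 0 < q%:R ^- l :> R by rewrite invr_gt0 exprn_gt0 //; lra.
have ball_le : q%:R ^- l * #|wt_ball (delta * n%:R) : {set vec}|%:R
               <= q%:R `^ (- (eps * n%:R)).
  apply: le_trans (ler_wpM2l (ltW c_gt0) (card_wt_ball_le n delta_gt0 delta_le)) _.
  rewrite -powR_invn ?ler0n // -powRD.
    by apply: ler_powR; lra.
  by apply/implyP => _; rewrite gt_eqF //; lra.
nra.
Qed.

End MinimumDistance.

Theorem proposition4p4 (R : realType) (F : finFieldType) (n r l : nat)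
  (hr : (r %| n)%N)
  (hl : (l%:R : R) < n%:R / 2 - (n %/ r)%:R)
  (delta eps : R) (hdelta : 0 < delta) (hdelta1 : delta <= 1 - (#|F|%:R)^-1)
  (heps : 0 < eps) :
  ((Hq #|F| delta + eps) * n%:R <= l%:R ->
     1 - 2 * powR (#|F|%:R) (- (eps * n%:R))
       < @qlrc_prob_dist_ge F n R r l (delta * n%:R))
  /\
  (powR 2 (2 / eps) <= #|F|%:R ->
   (delta + eps) * n%:R <= l%:R ->
     1 - 2 * powR (#|F|%:R) (- (eps * n%:R / 2))
       < @qlrc_prob_dist_ge F n R r l (delta * n%:R)).
Proof.
split; first exact: qlrc_dist_entropy_bound.
move=> hq hl2; rewrite [eps * _ / 2]mulrAC.
have qi_gt0 : 0 < #|F|%:R^-1 :> R by rewrite invr_gt0 ltr0n ltnW ?card_finNzRing_gt1.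
have delta01 : 0 < delta < 1 by rewrite hdelta /=; lra.
apply: qlrc_dist_entropy_bound => //; first lra.
apply: le_trans hl2; rewrite ler_wpM2r //.
by have := Hq_le (card_finNzRing_gt1 F) delta01 heps hq; lra.
Qed.
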